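(* Let $G$ be an amenable Hausdorff topological group, locally compact or SIN, acting continuously by isometries on a pointed metric space $(\mathcal{M},d,0)$ with bounded orbits; let $M$ be a bi-invariant mean on $G$ and $X=\mathcal{F}(\mathcal{M})$. Suppose $Q:X^{**}\to X^{**}$ is a bounded linear projection with $Q[X^{**}]=\kappa_X(X)$ and $T_g^{**}(\ker Q)\subset\ker Q$ for every $g\in G$. Let $R_G:X\to X^{**}$, $R_G(\mu)(f)=M(g\mapsto f(T_g\mu))$, let $P_G:=\kappa_X^{-1}\circ Q\circ R_G$ (a projection onto $I_G=\{\mu\in X: T_g\mu=\mu\ \forall g\}$), and let $\Psi:\mathrm{Lip}_0(\mathcal{M}/G)\to\mathrm{Lip}_0^G(\mathcal{M})$, $\Psi(f)(x)=f([Gx])$. If $Y\subset\mathrm{Lip}_0(\mathcal{M}/G)$ separates the points of $\mathcal{F}(\mathcal{M}/G)$ and $\ker P_G\subset\Psi(Y)_\perp$, then $\ker P_G=\mathrm{Lip}_0^G(\mathcal{M})_\perp$ and $P_G[X]$ is isomorphic to $\mathcal{F}(\mathcal{M}/G)$ via a linear isomorphism $T:\mathcal{F}(\mathcal{M}/G)\to P_G[X]$ with $T(\delta([Gx]))=P_G(\delta(x))$ whose inverse is the restriction to $P_G[X]$ of the norm-at-most-one operator $S:\mathcal{F}(\mathcal{M})\to\mathcal{F}(\mathcal{M}/G)$, $S(\delta(x))=\delta([Gx])$, and $\|T\|\le\|Q\|$. In particular $\mathcal{F}(\mathcal{M}/G)$ is isomorphic to a complemented subspace of $\mathcal{F}(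\mathcal{M})$.
   Context: $\mathrm{Lip}_0(N)$: real Lipschitz functions on a pointed metric space $N$ vanishing at the base point, normed by the Lipschitz constant; $\delta(m)$ evaluation at $m$; $\mathcal{F}(N)=\overline{\mathrm{span}}\{\delta(m):m\in N\}\subset\mathrm{Lip}_0(N)^*$, so $\mathcal{F}(N)^*=\mathrm{Lip}_0(N)$. $\kappa_X:X\to X^{**}$ is the canonical embedding; for $A\subset X^*$, $A_\perp=\{x\in X:a(x)=0\ \forall a\in A\}$. For $g\in G$, $T_g$ is the linear isometry of $\mathcal{F}(\mathcal{M})$ with $T_g\delta(m)=\delta(gm)-\delta(g0)$. $\mathcal{M}/G=\{[Gx]:x\in\mathcal{M}\}$ with $[Gx]=\overline{Gx}$, metric $d_{\mathcal{M}/G}([Gx],[Gy])=\inf\{d(x',y'):x'\in[Gx],y'\in[Gy]\}$ (the Hausdorff distance), base point $[G0]$. $\mathrm{Lip}_0^G(\mathcal{M})=\{f\in\mathrm{Lip}_0(\mathcal{M}):f(gx)=f(x)\ \forall g,x\}$. ''$Y$ separates the points of $\mathcal{F}(\mathcal{M}/G)$'': for every nonzero $\mu\in\mathcal{F}(\mathcal{M}/G)$ some $f\in Y$ has $f(\mu)\ne0$. A bi-invariant mean is a positive normalized linear functional invariant under left and right translations (on bounded uniformly continuous functions for SIN $G$; on $L_\infty(G)$ for locally compact amenable $G$). SIN: every neighborhood $U$ of $e$ contains a neighborhood $V$ of $e$ with $gVg^{-1}=V$ for all $g$. *)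

From HB Require Import structures.
From mathcomp Require Import all_boot all_order all_algebra.
From mathcomp Require Import all_classical all_reals all_analysis.
Set Implicit Arguments. Unset Strict Implicit. Unset Printing Implicit Defensive.
Import Order.TTheory GRing.Theory Num.Theory numFieldNormedType.Exports.
Local Open Scope ring_scope.
Local Open Scope classical_set_scope.

(* Conventions:
   - a pointed metric space is a carrier [T], a metric [d] and a base point [x0];
   - Lip_0(T)^* (which is X^** for X = F(T), since X^* = Lip_0(T)) is modelled by
     functionals [phi : (T -> R) -> R] that are linear and bounded on Lip_0
     functions and vanish on non-Lip_0 functions (a canonical representative);
   - F(T) is the norm closure of span{delta m} inside it; kappa_X is the inclusion. *)

Section Metric.
Context {R : realType} {T : Type}.

Definition is_metric (d : T -> T -> R) : Prop :=
  (forall x y, 0 <= d x y) /\ (forall x y, d x y = 0 <-> x = y) /\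
  (forall x y, d x y = d y x) /\ (forall x y z, d x z <= d x y + d y z).

End Metric.

Section Lip.
Context {R : realType} {T : Type} (d : T -> T -> R) (x0 : T).

Definition lip0 (f : T -> R) : Prop :=
  f x0 = 0 /\ exists L : R, forall x y, `|f x - f y| <= L * d x y.

Definition lipnorm (f : T -> R) : R :=
  sup [set r | exists x y, x <> y /\ r = `|f x - f y| / d x y].

Definition dual_elt (phi : (T -> R) -> R) : Prop :=
  (forall f, ~ lip0 f -> phi f = 0) /\
  (forall (a : R) f g, lip0 f -> lip0 g ->
      phi (fun x => a * f x + g x) = a * phi f + phi g) /\
  (exists C : R, forall f, lip0 f -> `|phi f| <= C * lipnorm f).

Definition dnorm (phi : (T -> R) -> R) : R :=
  sup [set r | exists f, lip0 f /\ lipnorm f <= 1 /\ r = `|phi f|].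

Definition delta (m : T) : (T -> R) -> R :=
  fun f => if `[< lip0 f >] then f m else 0.

Definition span_delta (psi : (T -> R) -> R) : Prop :=
  exists n (a : 'I_n -> R) (m : 'I_n -> T),
    psi = fun f => \sum_(i < n) a i * delta (m i) f.

Definition free_elt (mu : (T -> R) -> R) : Prop :=
  dual_elt mu /\
  forall eps : R, 0 < eps -> exists psi, span_delta psi /\
     dnorm (fun f => mu f - psi f) < eps.

Definition perp (A : set (T -> R)) : set ((T -> R) -> R) :=
  [set mu | free_elt mu /\ forall f, A f -> mu f = 0].

Definition opnorm_dual (Q : ((T -> R) -> R) -> ((T -> R) -> R)) : R :=
  sup [set r | exists phi, dual_elt phi /\ dnorm phi <= 1 /\ r = dnorm (Q phi)].

End Lip.

Definition lin_on {R : realType} {A B : Type} (P : set ((A -> R) -> R))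
  (F : ((A -> R) -> R) -> ((B -> R) -> R)) : Prop :=
  forall (a : R) u v, P u -> P v ->
    F (fun f => a * u f + v f) = (fun f => a * F u f + F v f).

Section Group.
Context {R : realType} (G : topologicalType) (mul : G -> G -> G) (inv : G -> G) (e : G).

Definition is_topgroup : Prop :=
  (forall a b c, mul a (mul b c) = mul (mul a b) c) /\
  (forall a, mul e a = a) /\ (forall a, mul (inv a) a = e) /\
  continuous (fun p : G * G => mul p.1 p.2) /\ continuous inv.

Definition SIN : Prop :=
  forall U, nbhs e U -> exists V, nbhs e V /\ V `<=` U /\
    forall g, [set mul (mul g v) (inv g) | v in V] = V.

Definition bounded_fun (phi : G -> R) : Prop := exists C : R, forall g, `|phi g| <= C.

Definition bcont (phi : G -> R) : Prop := continuous phi /\ bounded_fun phi.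

Definition buc (phi : G -> R) : Prop :=
  bounded_fun phi /\
  forall eps : R, 0 < eps -> exists U, nbhs e U /\ forall g h, U h ->
     `|phi (mul g h) - phi g| < eps /\ `|phi (mul h g) - phi g| < eps.

Definition bimean (D : set (G -> R)) (M : (G -> R) -> R) : Prop :=
  (forall (a : R) phi psi, D phi -> D psi ->
      M (fun g => a * phi g + psi g) = a * M phi + M psi) /\
  (forall phi, D phi -> (forall g, 0 <= phi g) -> 0 <= M phi) /\
  M (fun _ => 1) = 1 /\
  (forall phi h, D phi -> M (fun g => phi (mul h g)) = M phi) /\
  (forall phi h, D phi -> M (fun g => phi (mul g h)) = M phi).

End Group.

Section Action.
Context {R : realType} (G : topologicalType) (mul : G -> G -> G) (e : G)
  {T : Type} (d : T -> T -> R) (x0 : T) (act : G -> T -> T).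

Definition isom_action : Prop :=
  (forall x, act e x = x) /\
  (forall g h x, act (mul g h) x = act g (act h x)) /\
  (forall g x y, d (act g x) (act g y) = d x y) /\
  (forall g x (eps : R), 0 < eps -> exists U, nbhs g U /\ exists del : R, 0 < del /\
      forall h y, U h -> d y x < del -> d (act h y) (act g x) < eps) /\
  (forall x, exists C : R, forall g, d (act g x) x <= C).

Definition oclass (x : T) : set T :=
  [set y | forall eps : R, 0 < eps -> exists g, d y (act g x) < eps].

Definition quot_pts : Type := {A : set T | exists x, A = oclass x}.

Definition cls (x : T) : quot_pts := exist _ (oclass x) (ex_intro _ x erefl).

Definition dq (A B : quot_pts) : R :=
  inf [set r | exists x y, proj1_sig A x /\ proj1_sig B y /\ r = d x y].

Definition lip0G (f : T -> R) : Prop := lip0 d x0 f /\ forall g x, f (act g x) = f x.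

Definition Psi (f : quot_pts -> R) : T -> R := fun x => f (cls x).

Definition Tstar (g : G) (f : T -> R) : T -> R := fun m => f (act g m) - f (act g x0).

(* T_g^** on X^** (restricts to T_g on X) *)
Definition Tdd (g : G) (phi : (T -> R) -> R) : (T -> R) -> R :=
  fun f => if `[< lip0 d x0 f >] then phi (Tstar g f) else 0.

Definition RG (M : (G -> R) -> R) (mu : (T -> R) -> R) : (T -> R) -> R :=
  fun f => if `[< lip0 d x0 f >] then M (fun g => Tdd g mu f) else 0.

(* P_G = kappa^-1 o Q o R_G (kappa is the inclusion) *)
Definition PG (Q : ((T -> R) -> R) -> ((T -> R) -> R)) (M : (G -> R) -> R)
  (mu : (T -> R) -> R) : (T -> R) -> R := Q (RG M mu).

End Action.

Arguments dq {R G T} d act _ _.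
Arguments Psi {R G T} d act _ _.

From Pilot Require Import Defs.
From HB Require Import structures.
From mathcomp Require Import all_boot all_order all_algebra.
From mathcomp Require Import all_classical all_reals all_analysis.
From mathcomp Require Import ring lra.
Import Order.TTheory GRing.Theory Num.Theory numFieldNormedType.Exports.
Local Open Scope ring_scope.
Local Open Scope classical_set_scope.

(* Write X = F(M) and S : F(M) -> F(M/G) for the adjoint of Psi, so that
   S delta(x) = delta([Gx]).  The proof rests on three observations.
   1. Adjoints.  A map A : Lip_0(T) -> Lip_0(S) that is linear and does not increase
      Lipschitz constants has an adjoint A^* between the duals that is linear, of
      norm <= 1, and maps F(S) into F(T) as soon as it does so on point evaluations.
      S = Psi^* and T_g^** = (T_g^* )^* are such adjoints.
   2. Averaging.  With (Avg f)(x) = M(g |-> (T_g^* f)(x)), bi-invariance of the mean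
      makes Avg f a G-invariant Lipschitz function, so Avg f = Psi (sharp (Avg f)),
      and a density argument gives R_G = Avg^* on F(M).  Hence P_G = T o S with
      T := Q o (sharp o Avg)^*, an operator of norm <= ||Q||.
   3. Separation.  Q commutes with every T_g^**, so T takes values among the
      G-invariant elements of F(M), which P_G fixes: P_G is a projection.  The
      hypothesis on Y makes S vanish on ker P_G, hence S o P_G = S and, by density,
      S o T = id; the description of ker P_G follows from the same facts. *)

Set Implicit Arguments. Unset Strict Implicit. Unset Printing Implicit Defensive.

Lemma le_eps_eq0 {R : realType} (x : R) : (forall e : R, 0 < e -> `|x| <= e) -> x = 0.
Proof.
move=> H; apply/eqP; rewrite -normr_le0.
by apply/ler_addgt0Pr => e he; rewrite add0r; exact: H.
Qed.

(* A pointed space (T, d, x0) with nonnegative distance; no other metric axiom is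
   needed for the functional-analytic facts below. *)
Section LipschitzFreeSpace.
Context {R : realType} {T : Type} {d : T -> T -> R} {x0 : T}.
Hypothesis dge0 : forall x y, 0 <= d x y.

Local Notation lip0 := (lip0 d x0).
Local Notation lipnorm := (lipnorm d).
Local Notation dual := (dual_elt d x0).
Local Notation dnorm := (dnorm d x0).
Local Notation free := (free_elt d x0).
Local Notation delta := (delta d x0).

(* The difference quotients of a Lipschitz function are bounded above, so
   [lipnorm] is a genuine supremum. *)
Lemma lip_quotients_bounded f : lip0 f ->
  has_ubound [set r | exists x y, x <> y /\ r = `|f x - f y| / d x y].
Proof.
case=> _ [L HL]; exists `|L| => r [x [y [_ ->]]].
have [d0|dn0] := eqVneq (d x y) 0; first by rewrite d0 invr0 mulr0.
rewrite ler_pdivrMr ?lt0r ?dn0 ?dge0 //; apply: le_trans (HL x y) _.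
by rewrite ler_wpM2r ?dge0 // ler_norm.
Qed.

Lemma lipnorm_ge0 f : 0 <= lipnorm f.
Proof.
rewrite /lipnorm; set E := [set r | _].
have [[[r Er] hu]|nhs] := pselect (has_sup E); last by rewrite sup_out.
apply: le_trans (sup_upper_bound (conj (ex_intro _ r Er) hu) Er).
by case: Er => x [y [_ ->]]; rewrite divr_ge0 ?dge0.
Qed.

Lemma lip_bound f : lip0 f -> forall x y, `|f x - f y| <= lipnorm f * d x y.
Proof.
move=> hf x y; have [d0|dn0] := eqVneq (d x y) 0.
  have [L HL] := proj2 hf; by have := HL x y; rewrite d0 !mulr0.
have [->|nxy] := pselect (x = y); first by rewrite subrr normr0 mulr_ge0 ?lipnorm_ge0.
rewrite -ler_pdivrMr ?lt0r ?dn0 ?dge0 //.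
by apply: ub_le_sup; [exact: lip_quotients_bounded | exists x, y].
Qed.

Lemma lipnorm_le f L : 0 <= L -> (forall x y, `|f x - f y| <= L * d x y) ->
  lipnorm f <= L.
Proof.
move=> L0 HL; rewrite /lipnorm; set E := [set r | _].
have [ne|e0] := pselect (E !=set0); last first.
  have -> : E = set0 by apply/eqP/negPn/negP => /set0P.
  by rewrite sup0.
apply: ge_sup => // r [x [y [_ ->]]].
have [d0|dn0] := eqVneq (d x y) 0; first by rewrite d0 invr0 mulr0.
by rewrite ler_pdivrMr ?lt0r ?dn0 ?dge0.
Qed.

Lemma lip0_lin (a : R) f g : lip0 f -> lip0 g -> lip0 (fun x => a * f x + g x).
Proof.
move=> [f0 [L HL]] [g0 [K HK]]; split; first by rewrite f0 g0 mulr0 addr0.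
exists (`|a| * `|L| + `|K|) => x y.
have -> : a * f x + g x - (a * f y + g y) = a * (f x - f y) + (g x - g y) by ring.
apply: le_trans (ler_normD _ _) _; rewrite mulrDl normrM -mulrA; apply: lerD.
  apply: ler_wpM2l => //; apply: le_trans (HL x y) _.
  by rewrite ler_wpM2r ?dge0 ?ler_norm.
by apply: le_trans (HK x y) _; rewrite ler_wpM2r ?dge0 ?ler_norm.
Qed.

Lemma lip0_zero : lip0 (fun _ => 0).
Proof. by split => //; exists 0 => x y; rewrite subrr normr0 mul0r. Qed.

Lemma lipnorm_zero : lipnorm (fun _ => 0) = 0.
Proof.
apply/eqP; rewrite eq_le lipnorm_ge0 andbT.
by apply: lipnorm_le => // x y; rewrite subrr normr0 mul0r.
Qed.

(* A Lip_0 function with Lipschitz constant 0 vanishes (it vanishes at [x0]). *)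
Lemma lipnorm_eq0 f : lip0 f -> lipnorm f = 0 -> f = (fun _ => 0).
Proof.
move=> hf h0; apply: funext => x.
have := lip_bound hf x x0; rewrite h0 mul0r (proj1 hf) subr0.
by rewrite normr_le0 => /eqP.
Qed.

Lemma dual_zero : dual (fun _ => 0).
Proof.
split => //; split; first by move=> *; rewrite mulr0 addr0.
by exists 0 => f _; rewrite normr0 mul0r.
Qed.

Lemma dual_lin (a : R) u v : dual u -> dual v -> dual (fun f => a * u f + v f).
Proof.
move=> [u0 [ul [Cu HCu]]] [v0 [vl [Cv HCv]]]; split.
  by move=> f nf; rewrite u0 // v0 // mulr0 addr0.
split; first by move=> b f g hf hg; rewrite ul // vl //; ring.
exists (`|a| * `|Cu| + `|Cv|) => f hf; have l0 := lipnorm_ge0 f.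
apply: le_trans (ler_normD _ _) _; rewrite mulrDl normrM -mulrA; apply: lerD.
  apply: ler_wpM2l => //; apply: le_trans (HCu f hf) _.
  by rewrite ler_wpM2r // ler_norm.
by apply: le_trans (HCv f hf) _; rewrite ler_wpM2r // ler_norm.
Qed.

Lemma dual_scaled (a : R) phi : dual phi -> dual (fun f => a * phi f).
Proof.
move=> hp; have := dual_lin a hp dual_zero.
by congr dual; apply: funext => f; rewrite addr0.
Qed.

Lemma dual_sub u v : dual u -> dual v -> dual (fun f => u f - v f).
Proof.
move=> hu hv; have := dual_lin (-1) hv hu.
by congr dual; apply: funext => f; ring.
Qed.

Lemma dual_ext u v : dual u -> dual v -> (forall f, lip0 f -> u f = v f) -> u = v.
Proof.
move=> [u0 _] [v0 _] H; apply: funext => f.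
by have [/H //|nf] := pselect (lip0 f); rewrite u0 // v0.
Qed.

Lemma dual_at_zero phi : dual phi -> phi (fun _ => 0) = 0.
Proof.
case=> _ [lin _]; have := lin 1 _ _ lip0_zero lip0_zero.
have -> : (fun x : T => 1 * 0 + 0) = (fun _ => (0 : R)).
  by apply: funext => x; rewrite mulr0 addr0.
by move=> h; lra.
Qed.

Lemma dual_scale phi (a : R) f : dual phi -> lip0 f -> phi (fun x => a * f x) = a * phi f.
Proof.
move=> hp hf; have := proj1 (proj2 hp) a _ _ hf lip0_zero.
rewrite dual_at_zero // addr0 => <-.
by congr phi; apply: funext => x; rewrite addr0.
Qed.

Lemma dnorm_nneg phi : 0 <= dnorm phi.
Proof.
rewrite /Defs.dnorm; set E := [set r | _].
have E0 : E `|phi (fun _ => 0)|.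
  by exists (fun _ => 0); split; [exact: lip0_zero | rewrite lipnorm_zero].
have [hs|nhs] := pselect (has_sup E); last by rewrite sup_out.
exact: le_trans (sup_upper_bound hs E0).
Qed.

Lemma dnorm_le phi c : 0 <= c ->
  (forall f, lip0 f -> lipnorm f <= 1 -> `|phi f| <= c) -> dnorm phi <= c.
Proof.
move=> c0 H; apply: ge_sup; last by move=> r [f [hf [h1 ->]]]; apply: H.
exists `|phi (fun _ => 0)|, (fun _ => 0).
by split; [exact: lip0_zero | rewrite lipnorm_zero].
Qed.

Lemma dnorm_bound phi f : dual phi -> lip0 f -> `|phi f| <= dnorm phi * lipnorm f.
Proof.
move=> hp hf; have [L0|Ln0] := eqVneq (lipnorm f) 0.
  by rewrite L0 mulr0 (lipnorm_eq0 hf L0) dual_at_zero // normr0.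
have Lpos : 0 < lipnorm f by rewrite lt0r Ln0 lipnorm_ge0.
set g := fun x => (lipnorm f)^-1 * f x.
have hg : lip0 g.
  by have := lip0_lin (lipnorm f)^-1 hf lip0_zero; congr lip0; apply: funext => x; rewrite addr0.
have g1 : lipnorm g <= 1.
  apply: lipnorm_le => // x y; rewrite /g -mulrBr normrM mul1r gtr0_norm ?invr_gt0 //.
  by rewrite ler_pdivrMl // lip_bound.
have : `|phi g| <= dnorm phi.
  apply: ub_le_sup; last by exists g.
  case: hp => _ [_ [C HC]]; exists `|C| => r [h [hh [h1 ->]]].
  apply: le_trans (HC h hh) _; apply: le_trans (ler_norm _) _.
  by rewrite normrM ler_piMr // ger0_norm ?lipnorm_ge0.
by rewrite /g dual_scale // normrM gtr0_norm ?invr_gt0 // ler_pdivrMl // mulrC.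
Qed.

Lemma approx_bound u v f : dual u -> dual v -> lip0 f ->
  `|u f - v f| <= dnorm (fun g => u g - v g) * lipnorm f.
Proof. by move=> hu hv; exact: dnorm_bound (dual_sub hu hv). Qed.

Lemma dnorm_lin (a : R) u v : dual u -> dual v ->
  dnorm (fun f => a * u f + v f) <= `|a| * dnorm u + dnorm v.
Proof.
move=> hu hv; apply: dnorm_le; first by rewrite addr_ge0 ?mulr_ge0 ?dnorm_nneg.
move=> f hf h1; apply: le_trans (ler_normD _ _) _; rewrite normrM; apply: lerD.
  apply: ler_wpM2l => //; apply: le_trans (dnorm_bound hu hf) _.
  by rewrite ler_piMr ?dnorm_nneg.
by apply: le_trans (dnorm_bound hv hf) _; rewrite ler_piMr ?dnorm_nneg.
Qed.

Lemma dnorm_scale (a : R) phi : dual phi -> dnorm (fun f => a * phi f) <= `|a| * dnorm phi.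
Proof.
move=> hp; have := dnorm_lin a hp dual_zero.
have -> : (fun f => a * phi f + 0) = (fun f => a * phi f) by apply: funext => f; rewrite addr0.
move=> /le_trans; apply; rewrite -[X in _ <= X]addr0 lerD2l.
by apply: dnorm_le => // f _ _; rewrite normr0.
Qed.

Lemma deltaE m f : lip0 f -> delta m f = f m.
Proof. by move=> hf; rewrite /Defs.delta asboolT. Qed.

Lemma deltaN m f : ~ lip0 f -> delta m f = 0.
Proof. by move=> hf; rewrite /Defs.delta asboolF. Qed.

Lemma span_eval n (a : 'I_n -> R) (m : 'I_n -> T) f : lip0 f ->
  \sum_(i < n) a i * delta (m i) f = \sum_(i < n) a i * f (m i).
Proof. by move=> hf; apply: eq_bigr => i _; rewrite deltaE. Qed.

Lemma span_lin (b : R) u v : span_delta d x0 u -> span_delta d x0 v ->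
  span_delta d x0 (fun f => b * u f + v f).
Proof.
move=> [n [a [m ->]]] [k [c [p ->]]].
exists (n + k)%N, (fun i => match fintype.split i with inl j => b * a j | inr j => c j end),
  (fun i => match fintype.split i with inl j => m j | inr j => p j end).
apply: funext => f; rewrite big_split_ord /= big_distrr /=; congr (_ + _);
  apply: eq_bigr => i _; first by rewrite (unsplitK (inl i)) mulrA.
by rewrite (unsplitK (inr i)).
Qed.

Lemma span_delta1 x : span_delta d x0 (delta x).
Proof.
by exists 1%N, (fun _ => 1), (fun _ => x); apply: funext => f; rewrite big_ord1 mul1r.
Qed.

Lemma dual_span psi : span_delta d x0 psi -> dual psi.
Proof.
move=> [n [a [m ->]]]; elim: n a m => [|n IH] a m.
  have -> : (fun f => \sum_(i < 0) a i * delta (m i) f) = (fun _ => 0).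
    by apply: funext => f; rewrite big_ord0.
  exact: dual_zero.
have -> : (fun f => \sum_(i < n.+1) a i * delta (m i) f) = (fun f =>
   1 * (\sum_(i < n) a (widen_ord (leqnSn n) i) * delta (m (widen_ord (leqnSn n) i)) f)
   + (a ord_max * delta (m ord_max) f + (fun _ => 0) f)).
  by apply: funext => f; rewrite big_ord_recr mul1r addr0.
apply: dual_lin; first exact: IH.
apply: dual_lin dual_zero; split; first exact: deltaN.
split; first by move=> b f g hf hg; rewrite !deltaE //; apply: lip0_lin.
exists (d (m ord_max) x0) => f hf; rewrite deltaE // -[f _]subr0 -(proj1 hf) mulrC.
exact: lip_bound.
Qed.

Lemma free_of_span psi : span_delta d x0 psi -> free psi.
Proof.
move=> sp; split; first exact: dual_span.
move=> e he; exists psi; split => //; apply: le_lt_trans he.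
by apply: dnorm_le => // f _ _; rewrite subrr normr0.
Qed.

Lemma free_delta x : free (delta x).
Proof. exact/free_of_span/span_delta1. Qed.

Lemma free_zero : free (fun _ => 0).
Proof.
apply: free_of_span; exists 0%N, (fun _ => 0), (fun _ => x0).
by apply: funext => f; rewrite big_ord0.
Qed.

Lemma free_lin (b : R) u v : free u -> free v -> free (fun f => b * u f + v f).
Proof.
move=> [hu Hu] [hv Hv]; split; first exact: dual_lin.
move=> e he; have he' : 0 < e / (`|b| + 2) by rewrite divr_gt0 // ltr_wpDl.
have [pu [spu Hpu]] := Hu _ he'; have [pv [spv Hpv]] := Hv _ he'.
exists (fun f => b * pu f + pv f); split; first exact: span_lin.
have -> : (fun f => b * u f + v f - (b * pu f + pv f)) =
   (fun f => b * (u f - pu f) + (v f - pv f)) by apply: funext => f; ring.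
apply: le_lt_trans (dnorm_lin _ (dual_sub hu (dual_span spu)) (dual_sub hv (dual_span spv))) _.
apply: (@le_lt_trans _ _ (`|b| * (e / (`|b| + 2)) + e / (`|b| + 2))).
  by apply: lerD; [apply: ler_wpM2l; [|apply: ltW]|apply: ltW].
rewrite -[X in _ + X]mul1r -mulrDl mulrA ltr_pdivrMr ?ltr_wpDl //.
rewrite mulrC ltr_pM2l //; lra.
Qed.

Lemma free_sub u v : free u -> free v -> free (fun f => u f - v f).
Proof.
move=> hu hv; have := free_lin (-1) hv hu.
by congr free; apply: funext => f; ring.
Qed.

Lemma free_comb n (a : 'I_n -> R) (F : 'I_n -> (T -> R) -> R) : (forall i, free (F i)) ->
  free (fun f => \sum_(i < n) a i * F i f).
Proof.
elim: n a F => [|n IH] a F HF.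
  have -> : (fun f => \sum_(i < 0) a i * F i f) = (fun _ => 0).
    by apply: funext => f; rewrite big_ord0.
  exact: free_zero.
pose w := widen_ord (leqnSn n).
have -> : (fun f => \sum_(i < n.+1) a i * F i f) =
          (fun f => a ord_max * F ord_max f + \sum_(i < n) a (w i) * F (w i) f).
  by apply: funext => f; rewrite big_ord_recr addrC.
by apply: free_lin => //; apply: IH.
Qed.

Lemma free_of_approx mu : dual mu ->
  (forall e : R, 0 < e -> exists nu, free nu /\ dnorm (fun f => mu f - nu f) < e) ->
  free mu.
Proof.
move=> hm H; split => // e he; have he2 : 0 < e / 2 by rewrite divr_gt0.
have [nu [[hnu Hnu] Hmn]] := H _ he2; have [psi [sp Hp]] := Hnu _ he2.
exists psi; split => //.
have -> : (fun f => mu f - psi f) = (fun f => 1 * (mu f - nu f) + (nu f - psi f)).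
  by apply: funext => f; ring.
apply: le_lt_trans (dnorm_lin _ (dual_sub hm hnu) (dual_sub hnu (dual_span sp))) _.
by rewrite normr1 mul1r [e](splitr e); apply: ltrD.
Qed.

Lemma free_density (Phi : ((T -> R) -> R) -> R) (C : R) :
  (forall u v, free u -> free v -> `|Phi u - Phi v| <= C * dnorm (fun f => u f - v f)) ->
  (forall psi, span_delta d x0 psi -> Phi psi = 0) ->
  forall mu, free mu -> Phi mu = 0.
Proof.
move=> HPhi Hspan mu hm; apply: le_eps_eq0 => e he.
have he' : 0 < e / (`|C| + 1) by rewrite divr_gt0 // ltr_wpDl.
have [psi [sp Hd]] := proj2 hm _ he'.
have := HPhi _ _ hm (free_of_span sp); rewrite (Hspan psi sp) subr0 => /le_trans; apply.
apply: le_trans (ler_wpM2r (dnorm_nneg _) (ler_norm C)) _.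
apply: le_trans (ler_wpM2l (normr_ge0 C) (ltW Hd)) _.
rewrite mulrA ler_pdivrMr ?ltr_wpDl // mulrC ler_wpM2l ?(ltW he) //; lra.
Qed.

End LipschitzFreeSpace.

Section Adjoint.
Context {R : realType} {S T : Type} {dS : S -> S -> R} {s0 : S} {dT : T -> T -> R} {t0 : T}.
Hypotheses (dS_ge0 : forall x y, 0 <= dS x y) (dT_ge0 : forall x y, 0 <= dT x y).

Definition nonexpansive (A : (T -> R) -> (S -> R)) : Prop :=
  (forall f, lip0 dT t0 f -> lip0 dS s0 (A f) /\ lipnorm dS (A f) <= lipnorm dT f) /\
  (forall (a : R) f g, lip0 dT t0 f -> lip0 dT t0 g ->
     A (fun x => a * f x + g x) = (fun y => a * A f y + A g y)).

(* The adjoint [A^*] : Lip_0(S)^* -> Lip_0(T)^*, normalized to vanish off Lip_0(T). *)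
Definition adj (A : (T -> R) -> (S -> R)) (phi : (S -> R) -> R) : (T -> R) -> R :=
  fun f => if `[< lip0 dT t0 f >] then phi (A f) else 0.

Variable A : (T -> R) -> (S -> R).
Hypothesis hA : nonexpansive A.

Lemma adjE phi f : lip0 dT t0 f -> adj A phi f = phi (A f).
Proof. by move=> hf; rewrite /adj asboolT. Qed.

Lemma adjN phi f : ~ lip0 dT t0 f -> adj A phi f = 0.
Proof. by move=> hf; rewrite /adj asboolF. Qed.

Lemma adj_lin (a : R) u v : adj A (fun f => a * u f + v f) = (fun f => a * adj A u f + adj A v f).
Proof. by apply: funext => f; rewrite /adj; case: ifP => // _; rewrite mulr0 addr0. Qed.

Lemma adj_comb n (a : 'I_n -> R) (F : 'I_n -> (S -> R) -> R) :
  adj A (fun f => \sum_(i < n) a i * F i f) = (fun f => \sum_(i < n) a i * adj A (F i) f).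
Proof.
apply: funext => f; rewrite /adj; case: ifP => // _.
by rewrite big1 // => i _; rewrite mulr0.
Qed.

Lemma dual_adj phi : dual_elt dS s0 phi -> dual_elt dT t0 (adj A phi).
Proof.
move=> hp; split; first exact: adjN.
split.
  move=> a f g hf hg; rewrite !adjE ?(proj2 hA) //; last exact: lip0_lin.
  by apply: (proj1 (proj2 hp)); apply: (proj1 (proj1 hA _ _)).
exists (dnorm dS s0 phi) => f hf; rewrite adjE //; have [hAf nAf] := proj1 hA f hf.
apply: le_trans (dnorm_bound dS_ge0 hp hAf) _.
by apply: ler_wpM2l; [exact: dnorm_nneg dS_ge0 _ | exact: nAf].
Qed.

Lemma dnorm_adj phi : dual_elt dS s0 phi -> dnorm dT t0 (adj A phi) <= dnorm dS s0 phi.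
Proof.
move=> hp; apply: dnorm_le => // [|f hf h1]; first exact: dnorm_nneg dS_ge0 _.
rewrite adjE //; have [hAf nAf] := proj1 hA f hf.
apply: le_trans (dnorm_bound dS_ge0 hp hAf) _.
by rewrite ler_piMr ?dnorm_nneg // (le_trans nAf).
Qed.

Lemma free_adj mu : (forall m, free_elt dT t0 (adj A (delta dS s0 m))) ->
  free_elt dS s0 mu -> free_elt dT t0 (adj A mu).
Proof.
move=> Hdelta hm; apply: free_of_approx => //; first exact/dual_adj/(proj1 hm).
move=> e he; have [psi [sp Hd]] := proj2 hm _ he; have [n [a [m Epsi]]] := sp.
exists (fun f => \sum_(i < n) a i * adj A (delta dS s0 (m i)) f).
split; first exact: free_comb.
have -> : (fun f => adj A mu f - \sum_(i < n) a i * adj A (delta dS s0 (m i)) f) =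
          adj A (fun f => mu f - psi f).
  apply: funext => f; rewrite /adj Epsi; case: ifP => // _.
  by rewrite big1 ?subr0 // => i _; rewrite mulr0.
apply: le_lt_trans Hd; apply: dnorm_adj.
exact: dual_sub (proj1 hm) (dual_span dS_ge0 sp).
Qed.

End Adjoint.

Arguments nonexpansive {R S T} dS s0 dT t0 A.
Arguments adj {R S T} dT t0 A phi f.

Section GroupAction.
Context {R : realType} {G : topologicalType} (mul : G -> G -> G) (inv : G -> G) (e : G)
  {T : Type} (d : T -> T -> R) (x0 : T) (act : G -> T -> T).
Hypotheses (dge0 : forall x y, 0 <= d x y) (d_refl : forall x, d x x = 0).
Hypotheses (act_e : forall x, act e x = x) (inv_l : forall g, mul (inv g) g = e).
Hypothesis act_mul : forall g h x, act (mul g h) x = act g (act h x).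
Hypothesis act_iso : forall g x y, d (act g x) (act g y) = d x y.

Local Notation lip0 := (lip0 d x0).
Local Notation lipnorm := (lipnorm d).
Local Notation dual := (dual_elt d x0).
Local Notation dnorm := (dnorm d x0).
Local Notation free := (free_elt d x0).
Local Notation delta := (delta d x0).
Local Notation Ts := (@Tstar R G T x0 act).
Local Notation Tdd := (Tdd d x0 act).
Local Notation Qp := (quot_pts d act).
Local Notation dq := (dq d act).
Local Notation cls := (cls d act).
Local Notation q0 := (cls x0).
Local Notation oclass := (oclass d act).
Local Notation lip0G := (lip0G d x0 act).
Local Notation Psi := (Psi d act).
Local Notation lip0q := (Defs.lip0 dq q0).
Local Notation lipnormq := (Defs.lipnorm dq).
Local Notation dualq := (dual_elt dq q0).
Local Notation dnormq := (Defs.dnorm dq q0).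
Local Notation freeq := (free_elt dq q0).
Local Notation deltaq := (Defs.delta dq q0).

Lemma Ts_nonexp g : nonexpansive d x0 d x0 (Ts g).
Proof.
split; last by move=> a f f' _ _; apply: funext => m; rewrite /Tstar; ring.
move=> f hf; have hb x y : `|Ts g f x - Ts g f y| <= lipnorm f * d x y.
  have -> : Ts g f x - Ts g f y = f (act g x) - f (act g y) by rewrite /Tstar; ring.
  by rewrite -(act_iso g x y); exact: (lip_bound dge0 hf).
split; last exact: (lipnorm_le dge0 (lipnorm_ge0 dge0 f) hb).
by split; [rewrite /Tstar subrr | exists (lipnorm f)].
Qed.

Lemma Ts_comp g h f : Ts g (Ts h f) = Ts (mul h g) f.
Proof. by apply: funext => m; rewrite /Tstar !act_mul; ring. Qed.

Lemma Tdd_adj g : Tdd g = adj d x0 (Ts g).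
Proof. by []. Qed.

Lemma TddE g phi f : lip0 f -> Tdd g phi f = phi (Ts g f).
Proof. exact: adjE. Qed.

Lemma Tdd_lin g (a : R) u v : Tdd g (fun f => a * u f + v f) = (fun f => a * Tdd g u f + Tdd g v f).
Proof. exact: adj_lin. Qed.

Lemma dual_Tdd g phi : dual phi -> dual (Tdd g phi).
Proof. exact: (dual_adj dge0 dge0 (Ts_nonexp g)). Qed.

(* T_g^** maps delta(m) to delta(gm) - delta(g x0), hence preserves F(M). *)
Lemma free_Tdd g mu : free mu -> free (Tdd g mu).
Proof.
rewrite Tdd_adj; apply: (free_adj dge0 dge0 (Ts_nonexp g)) => m.
have -> : adj d x0 (Ts g) (delta m) = (fun f => delta (act g m) f - delta (act g x0) f).
  apply: funext => f; have [hf|nf] := pselect (lip0 f); last by rewrite adjN ?deltaN // subr0.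
  by rewrite adjE // !deltaE //; apply: (proj1 (proj1 (Ts_nonexp g) f hf)).
exact: (free_sub dge0 (free_delta dge0 _) (free_delta dge0 _)).
Qed.

Definition pickq (A : Qp) : T := projT1 (cid (proj2_sig A)).

Lemma pickqP (A : Qp) : proj1_sig A = oclass (pickq A).
Proof. by rewrite /pickq; case: (cid _). Qed.

Lemma pickq_cls (A : Qp) : A = cls (pickq A).
Proof. by case: A => S HS; apply: eq_exist; have := pickqP (exist _ S HS). Qed.

Lemma oclass_self x : oclass x x.
Proof. by move=> eps he; exists e; rewrite act_e d_refl. Qed.

Lemma cls_act g x : cls (act g x) = cls x.
Proof.
apply: eq_exist; apply/seteqP; split => y Hy eps he; have [h Hh] := Hy eps he.
  by exists (mul h g); rewrite act_mul.
by exists (mul h (inv g)); rewrite act_mul -(act_mul (inv g)) inv_l act_e.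
Qed.

Lemma dq_lb (A B : Qp) x y : proj1_sig A x -> proj1_sig B y -> dq A B <= d x y.
Proof.
move=> hx hy; apply: ge_inf; last by exists x, y.
by exists 0 => r [x' [y' [_ [_ ->]]]].
Qed.

Lemma dq_glb (A B : Qp) c :
  (forall x y, proj1_sig A x -> proj1_sig B y -> c <= d x y) -> c <= dq A B.
Proof.
move=> H; apply: lb_le_inf; last by move=> r [x [y [hx [hy ->]]]]; apply: H.
by exists (d (pickq A) (pickq B)), (pickq A), (pickq B); rewrite !pickqP; split; [|split];
  try exact: oclass_self.
Qed.

Lemma dq_ge0 A B : 0 <= dq A B.
Proof. by apply: dq_glb => x y _ _; apply: dge0. Qed.

Lemma lip0G_oclass F x y : lip0G F -> oclass x y -> F y = F x.
Proof.
move=> [hF hinv] hxy; apply/eqP; rewrite -subr_eq0; apply/eqP.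
apply: le_eps_eq0 => eps he; have L0 := lipnorm_ge0 dge0 F.
have he' : 0 < eps / (lipnorm F + 1) by rewrite divr_gt0 // ltr_wpDl.
have [g Hg] := hxy _ he'; rewrite -(hinv g x).
apply: le_trans (lip_bound dge0 hF y (act g x)) _.
apply: le_trans (ler_wpM2l L0 (ltW Hg)) _.
rewrite mulrA ler_pdivrMr ?ltr_wpDl // mulrC ler_wpM2l ?(ltW he) //; lra.
Qed.

Definition sharp (F : T -> R) (A : Qp) : R := F (pickq A).

Lemma sharp_pt F (A : Qp) x : lip0G F -> proj1_sig A x -> sharp F A = F x.
Proof. by move=> hF hx; rewrite /sharp; symmetry; apply: (lip0G_oclass hF); rewrite -pickqP. Qed.

Lemma sharp_lip F : lip0G F -> lip0q (sharp F) /\ lipnormq (sharp F) <= lipnorm F.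
Proof.
move=> hF; have L0 := lipnorm_ge0 dge0 F.
have hb A B : `|sharp F A - sharp F B| <= lipnorm F * dq A B.
  have [Lz|Lnz] := eqVneq (lipnorm F) 0.
    by rewrite Lz mul0r; have := lip_bound dge0 (proj1 hF) (pickq A) (pickq B); rewrite Lz mul0r.
  have Lp : 0 < lipnorm F by rewrite lt0r Lnz.
  rewrite mulrC -ler_pdivrMr //; apply: dq_glb => x y hx hy.
  rewrite (sharp_pt hF hx) (sharp_pt hF hy) ler_pdivrMr // mulrC.
  exact: (lip_bound dge0 (proj1 hF)).
split; last exact: (lipnorm_le dq_ge0 L0 hb).
split; last by exists (lipnorm F).
by rewrite (sharp_pt (A := q0) hF (oclass_self x0)); case: hF => [[]].
Qed.

Lemma Psi_nonexp : nonexpansive d x0 dq q0 Psi.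
Proof.
split => // f hf; have L0 := lipnorm_ge0 dq_ge0 f.
have hb x y : `|Psi f x - Psi f y| <= lipnormq f * d x y.
  apply: le_trans (lip_bound dq_ge0 hf _ _) _; apply: ler_wpM2l => //.
  by apply: dq_lb; apply: oclass_self.
split; last exact: (lipnorm_le dge0 L0 hb).
by split; [case: hf | exists (lipnormq f)].
Qed.

Lemma Psi_lip0G f : lip0q f -> lip0G (Psi f).
Proof.
by move=> hf; split; [exact: (proj1 (proj1 Psi_nonexp f hf)) | move=> g x; rewrite /Psi cls_act].
Qed.

Lemma Psi_sharp F : lip0G F -> Psi (sharp F) = F.
Proof.
by move=> hF; apply: funext => x; rewrite /Psi (sharp_pt (A := cls x) hF (oclass_self x)).
Qed.

Definition Sop : ((T -> R) -> R) -> (Qp -> R) -> R := adj dq q0 Psi.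

Lemma SopE mu f : lip0q f -> Sop mu f = mu (Psi f).
Proof. exact: adjE. Qed.

Lemma S_delta x : Sop (delta x) = deltaq (cls x).
Proof.
apply: funext => f; have [hf|nf] := pselect (lip0q f); last by rewrite /Sop adjN ?deltaN.
by rewrite SopE // !deltaE //; apply: (proj1 (proj1 Psi_nonexp f hf)).
Qed.

Lemma dual_S mu : dual mu -> dualq (Sop mu).
Proof. exact: (dual_adj dge0 dq_ge0 Psi_nonexp). Qed.

Lemma dnorm_S mu : dual mu -> dnormq (Sop mu) <= dnorm mu.
Proof. exact: (dnorm_adj dge0 dq_ge0 Psi_nonexp). Qed.

Lemma free_S mu : free mu -> freeq (Sop mu).
Proof.
apply: (free_adj dge0 dq_ge0 Psi_nonexp) => m.
by have := S_delta m; rewrite /Sop => ->; exact: (free_delta dq_ge0).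
Qed.

Section Averaging.
(* [D] is a space of bounded functions on G carrying the bi-invariant mean [M]:
   for locally compact G the bounded continuous functions, for SIN G the bounded
   uniformly continuous ones.  We only use that [D] is a uniformly closed linear
   space containing the constants and the orbit functions g |-> f(gy). *)
Variables (D : set (G -> R)) (M : (G -> R) -> R).
Hypothesis D_lin : forall (a : R) phi psi, D phi -> D psi -> D (fun g => a * phi g + psi g).
Hypothesis D_const : forall c : R, D (fun _ => c).
Hypothesis D_orbit : forall f y, lip0 f -> D (fun g => f (act g y)).
Hypothesis D_closed : forall phi, (forall eps : R, 0 < eps ->
  exists psi, D psi /\ forall g, `|phi g - psi g| <= eps) -> D phi.
Hypothesis HM : bimean mul D M.

Lemma M_lin (a : R) phi psi : D phi -> D psi ->
  M (fun g => a * phi g + psi g) = a * M phi + M psi.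
Proof. by case: HM => h _; apply: h. Qed.

Lemma M_const c : M (fun _ => c) = c.
Proof.
have M1 := proj1 (proj2 (proj2 HM)).
have M0 : M (fun _ => 0) = 0.
  have := M_lin 1 (D_const 0) (D_const 0).
  have -> : (fun _ : G => 1 * (0 : R) + 0) = (fun _ => 0).
    by apply: funext => g; rewrite mulr0 addr0.
  by move=> h; lra.
have := M_lin c (D_const 1) (D_const 0).
have -> : (fun _ : G => c * 1 + 0) = (fun _ => c) by apply: funext => g; rewrite mulr1 addr0.
by rewrite M1 M0 mulr1 addr0.
Qed.

Lemma D_sub phi psi : D phi -> D psi -> D (fun g => phi g - psi g).
Proof. by move=> hp hq; have := D_lin (-1) hq hp; congr D; apply: funext => g; ring. Qed.

Lemma M_sub phi psi : D phi -> D psi -> M (fun g => phi g - psi g) = M phi - M psi.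
Proof.
move=> hp hq; have := M_lin (-1) hq hp.
have -> : (fun g => -1 * psi g + phi g) = (fun g => phi g - psi g) by apply: funext => g; ring.
by move=> ->; ring.
Qed.

Lemma D_comb n (a : 'I_n -> R) (F : 'I_n -> G -> R) : (forall i, D (F i)) ->
  D (fun g => \sum_(i < n) a i * F i g) /\
  M (fun g => \sum_(i < n) a i * F i g) = \sum_(i < n) a i * M (F i).
Proof.
elim: n a F => [|n IH] a F HF.
  have -> : (fun g => \sum_(i < 0) a i * F i g) = (fun _ => 0).
    by apply: funext => g; rewrite big_ord0.
  by rewrite big_ord0 M_const.
pose w := widen_ord (leqnSn n).
have [DI MI] := IH (fun i => a (w i)) (fun i => F (w i)) (fun i => HF _).
have -> : (fun g => \sum_(i < n.+1) a i * F i g) =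
          (fun g => a ord_max * F ord_max g + \sum_(i < n) a (w i) * F (w i) g).
  by apply: funext => g; rewrite big_ord_recr addrC.
by rewrite M_lin // MI big_ord_recr addrC; split => //; apply: D_lin.
Qed.

(* The mean is positive and normalized, hence bounded by the sup norm. *)
Lemma M_bound phi c : D phi -> (forall g, `|phi g| <= c) -> `|M phi| <= c.
Proof.
move=> hp hc; have M_pos := proj1 (proj2 HM).
have lo : 0 <= M (fun g => phi g - (- c)).
  apply: M_pos (D_sub hp (D_const _)) _ => g; rewrite subr_ge0.
  by have := hc g; rewrite ler_norml => /andP[].
have hi : 0 <= M (fun g => c - phi g).
  apply: M_pos (D_sub (D_const _) hp) _ => g; rewrite subr_ge0.
  by have := hc g; rewrite ler_norml => /andP[].
move: lo hi; rewrite !M_sub // !M_const ler_norml => lo hi.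
by apply/andP; split; lra.
Qed.

Lemma M_left phi h : D phi -> M (fun g => phi (mul h g)) = M phi.
Proof. by case: HM => _ [_ [_ [hl _]]]; apply: hl. Qed.

Lemma M_right phi h : D phi -> M (fun g => phi (mul g h)) = M phi.
Proof. by case: HM => _ [_ [_ [_ hr]]]; apply: hr. Qed.

Lemma D_Ts f x : lip0 f -> D (fun g => Ts g f x).
Proof. by move=> hf; apply: D_sub; apply: D_orbit. Qed.

(* For mu in F(M) and f in Lip_0(M), the orbit function g |-> <T_g^* f, mu> is
   admissible: it is a uniform limit of finite combinations of orbit functions. *)
Lemma D_orbit_free mu f : free mu -> lip0 f -> D (fun g => mu (Ts g f)).
Proof.
move=> hm hf; apply: D_closed => eps he; have L0 := lipnorm_ge0 dge0 f.
have he' : 0 < eps / (lipnorm f + 1) by rewrite divr_gt0 // ltr_wpDl.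
have [psi [sp Hd]] := proj2 hm _ he'; have [n [a [m Epsi]]] := sp.
exists (fun g => \sum_(i < n) a i * Ts g f (m i)); split.
  exact: (proj1 (D_comb a (fun i => D_Ts (m i) hf))).
move=> g; have [hTf nTf] := proj1 (Ts_nonexp g) f hf.
have -> : \sum_(i < n) a i * Ts g f (m i) = psi (Ts g f).
  by rewrite Epsi (span_eval _ _ hTf).
apply: le_trans (approx_bound dge0 (proj1 hm) (dual_span dge0 sp) hTf) _.
apply: le_trans (ler_pM (dnorm_nneg dge0 _) (lipnorm_ge0 dge0 _) (ltW Hd) nTf) _.
by rewrite mulrAC ler_pdivrMr ?ltr_wpDl // ler_pM2l //; lra.
Qed.

Definition Avg (f : T -> R) : T -> R := fun x => M (fun g => Ts g f x).

(* Avg is linear and does not increase Lipschitz constants (the mean is a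
   contraction for the sup norm). *)
Lemma Avg_nonexp : nonexpansive d x0 d x0 Avg.
Proof.
split; last first.
  move=> a f f' hf hf'; apply: funext => x; rewrite /Avg -M_lin; try exact: D_Ts.
  by congr M; apply: funext => g; rewrite /Tstar; ring.
move=> f hf; have hb x y : `|Avg f x - Avg f y| <= lipnorm f * d x y.
  rewrite /Avg -M_sub; try exact: D_Ts.
  apply: M_bound; first by apply: D_sub; apply: D_Ts.
  move=> g; have [hTf nTf] := proj1 (Ts_nonexp g) f hf.
  by apply: le_trans (lip_bound dge0 hTf x y) _; apply: ler_wpM2r.
split; last exact: (lipnorm_le dge0 (lipnorm_ge0 dge0 f) hb).
split; last by exists (lipnorm f).
have -> : Avg f x0 = M (fun _ => 0) by congr M; apply: funext => g; rewrite /Tstar subrr.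
exact: M_const.
Qed.

(* Avg f is G-invariant: this is where right invariance of the mean is used. *)
Lemma Avg_inv f h x : lip0 f -> Avg f (act h x) = Avg f x.
Proof.
move=> hf; rewrite /Avg.
have D1 : D (fun g => f (act (mul g h) x0)).
  have -> : (fun g => f (act (mul g h) x0)) = (fun g => f (act g (act h x0))).
    by apply: funext => g; rewrite act_mul.
  exact: D_orbit.
have D2 : D (fun g => Ts (mul g h) f x).
  have -> : (fun g => Ts (mul g h) f x) = (fun g => f (act g (act h x)) - f (act g (act h x0))).
    by apply: funext => g; rewrite /Tstar !act_mul.
  by apply: D_sub; apply: D_orbit.
have -> : (fun g => Ts g f (act h x)) =
          (fun g => Ts (mul g h) f x - (f (act g x0) - f (act (mul g h) x0))).
  by apply: funext => g; rewrite /Tstar !act_mul; ring.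
rewrite M_sub //; last by apply: D_sub => //; apply: D_orbit.
rewrite M_sub //; last exact: D_orbit.
rewrite (M_right (phi := fun g => f (act g x0)) h); last exact: D_orbit.
rewrite (M_right (phi := fun g => Ts g f x) h); last exact: D_Ts.
by rewrite subrr subr0.
Qed.

(* Avg f only depends on the G-orbit of f: left invariance of the mean. *)
Lemma Avg_Ts h f : lip0 f -> Avg (Ts h f) = Avg f.
Proof.
move=> hf; apply: funext => x; rewrite /Avg.
under eq_fun do rewrite Ts_comp.
by rewrite (M_left (phi := fun g => Ts g f x) h) //; exact: D_Ts.
Qed.

Lemma Avg_lip0G f : lip0 f -> lip0G (Avg f).
Proof.
by move=> hf; split; [exact: (proj1 (proj1 Avg_nonexp f hf)) | move=> g x; exact: Avg_inv].
Qed.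

(* Fubini for the mean: M(g |-> <T_g^* f, mu>) = <Avg f, mu> for mu in F(M).  Both
   sides are dual-norm Lipschitz in mu and agree on finite combinations of deltas. *)
Lemma interchange mu f : free mu -> lip0 f -> M (fun g => mu (Ts g f)) = mu (Avg f).
Proof.
move=> hm hf; have [hAf nAf] := proj1 Avg_nonexp f hf.
apply/eqP; rewrite -subr_eq0; apply/eqP.
pose Phi nu := M (fun g => nu (Ts g f)) - nu (Avg f).
rewrite -/(Phi mu); move: mu hm; apply: (free_density dge0 (C := lipnorm f + lipnorm f)).
  move=> u v hu hv; rewrite /Phi.
  have -> : M (fun g => u (Ts g f)) - u (Avg f) - (M (fun g => v (Ts g f)) - v (Avg f)) =
            M (fun g => u (Ts g f) - v (Ts g f)) - (u (Avg f) - v (Avg f)).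
    by rewrite M_sub; [ring | exact: D_orbit_free | exact: D_orbit_free].
  apply: le_trans (ler_normB _ _) _; rewrite mulrDl; apply: lerD.
    apply: M_bound; first by apply: D_sub; apply: D_orbit_free.
    move=> g; have [hTf nTf] := proj1 (Ts_nonexp g) f hf.
    rewrite mulrC; apply: le_trans (approx_bound dge0 (proj1 hu) (proj1 hv) hTf) _.
    by apply: ler_wpM2l; [exact: dnorm_nneg | ].
  rewrite mulrC; apply: le_trans (approx_bound dge0 (proj1 hu) (proj1 hv) hAf) _.
  by apply: ler_wpM2l; [exact: dnorm_nneg | ].
move=> psi [n [a [m ->]]]; rewrite /Phi (span_eval _ _ hAf); apply/eqP; rewrite subr_eq0.
have -> : (fun g => \sum_(i < n) a i * delta (m i) (Ts g f)) =
          (fun g => \sum_(i < n) a i * Ts g f (m i)).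
  by apply: funext => g; apply: (span_eval _ _ (proj1 (proj1 (Ts_nonexp g) f hf))).
by rewrite (proj2 (D_comb a (fun i => D_Ts (m i) hf))).
Qed.

Local Notation RG := (RG d x0 act M).

Lemma RG_adj mu : free mu -> RG mu = adj d x0 Avg mu.
Proof.
move=> hm; apply: funext => f; have [hf|nf] := pselect (lip0 f); last first.
  by rewrite adjN // /Defs.RG asboolF.
rewrite adjE // /Defs.RG asboolT // -interchange //.
by congr M; apply: funext => g; rewrite TddE.
Qed.

Lemma RG_fix rho : dual rho -> (forall g, Tdd g rho = rho) -> RG rho = rho.
Proof.
move=> hr hinv; apply: funext => f; have [hf|nf] := pselect (lip0 f); last first.
  by rewrite /Defs.RG asboolF // (proj1 hr).
rewrite /Defs.RG asboolT //; under eq_fun do rewrite hinv.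
exact: M_const.
Qed.

Definition Rt : ((Qp -> R) -> R) -> (T -> R) -> R := adj d x0 (fun f => sharp (Avg f)).

Lemma sharpAvg_nonexp : nonexpansive dq q0 d x0 (fun f => sharp (Avg f)).
Proof.
split; last by move=> a f f' hf hf'; rewrite (proj2 Avg_nonexp).
move=> f hf; have [hs ns] := sharp_lip (Avg_lip0G hf).
by split => //; apply: le_trans ns _; apply: (proj2 (proj1 Avg_nonexp f hf)).
Qed.

Lemma dual_Rt nu : dualq nu -> dual (Rt nu).
Proof. exact: (dual_adj dq_ge0 dge0 sharpAvg_nonexp). Qed.

Lemma dnorm_Rt nu : dualq nu -> dnorm (Rt nu) <= dnormq nu.
Proof. exact: (dnorm_adj dq_ge0 dge0 sharpAvg_nonexp). Qed.

Lemma Rt_S mu : free mu -> Rt (Sop mu) = RG mu.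
Proof.
move=> hm; rewrite RG_adj //; apply: funext => f.
have [hf|nf] := pselect (lip0 f); last by rewrite /Rt !adjN.
rewrite /Rt !adjE // /Sop adjE ?Psi_sharp //; first exact: Avg_lip0G.
exact: (proj1 (sharp_lip (Avg_lip0G hf))).
Qed.

(* Rt takes values among the G-invariant elements, since Avg f depends only on the
   orbit of f. *)
Lemma Rt_inv h nu : Tdd h (Rt nu) = Rt nu.
Proof.
apply: funext => f; have [hf|nf] := pselect (lip0 f); last by rewrite Tdd_adj /Rt !adjN.
rewrite TddE // /Rt !adjE ?Avg_Ts //; exact: (proj1 (proj1 (Ts_nonexp h) f hf)).
Qed.

Section Projection.
Variable Q : ((T -> R) -> R) -> ((T -> R) -> R).
Hypothesis Q_dual : forall phi, dual phi -> dual (Q phi).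
Hypothesis Q_lin : lin_on dual Q.
Hypothesis Q_bnd : exists C : R, forall phi, dual phi -> dnorm (Q phi) <= C * dnorm phi.
Hypothesis Q_idem : forall phi, dual phi -> Q (Q phi) = Q phi.
Hypothesis Q_free : forall phi, dual phi -> free (Q phi).
Hypothesis Q_onto : forall mu, free mu -> exists phi, dual phi /\ Q phi = mu.
Hypothesis Q_ker : forall g phi, dual phi -> Q phi = (fun _ => 0) ->
  Q (Tdd g phi) = (fun _ => 0).

Lemma Q0 : Q (fun _ => 0) = (fun _ => 0).
Proof.
have := Q_lin 1 dual_zero dual_zero.
have -> : (fun f : T -> R => 1 * 0 + 0) = (fun _ => (0 : R)).
  by apply: funext => f; rewrite mulr0 addr0.
by move=> h; apply: funext => f; have := congr1 (fun F => F f) h => /=; lra.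
Qed.

Lemma Q_scale (a : R) phi : dual phi -> Q (fun f => a * phi f) = (fun f => a * Q phi f).
Proof.
move=> hp; have := Q_lin a hp dual_zero; rewrite Q0.
have -> : (fun f => a * phi f + 0) = (fun f => a * phi f) by apply: funext => f; rewrite addr0.
by move=> ->; apply: funext => f; rewrite addr0.
Qed.

Lemma Q_fix mu : free mu -> Q mu = mu.
Proof. by move=> hm; have [phi [hp <-]] := Q_onto hm; rewrite Q_idem. Qed.

(* Q commutes with each T_g^**: phi - Q phi lies in ker Q, which T_g^** preserves,
   and T_g^** (Q phi) lies in F(M), which Q fixes. *)
Lemma Q_comm g phi : dual phi -> Q (Tdd g phi) = Tdd g (Q phi).
Proof.
move=> hp; have hq := Q_dual hp.
have hk : dual (fun f => -1 * Q phi f + phi f) by apply: dual_lin.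
have k0 : Q (fun f => -1 * Q phi f + phi f) = (fun _ => 0).
  by rewrite Q_lin // Q_idem //; apply: funext => f; ring.
have := Q_ker g hk k0; rewrite Tdd_lin Q_lin; [|exact: dual_Tdd | exact: dual_Tdd].
rewrite (Q_fix (free_Tdd g (Q_free hp))) => h.
by apply: funext => f; have := congr1 (fun F => F f) h => /=; lra.
Qed.

Local Notation KQ := (opnorm_dual d x0 Q).

Lemma opnorm_bounded :
  has_ubound [set r | exists phi, dual phi /\ dnorm phi <= 1 /\ r = dnorm (Q phi)].
Proof.
have [C HC] := Q_bnd; exists `|C| => r [phi [hp [h1 ->]]].
apply: le_trans (HC _ hp) _; apply: le_trans (ler_norm _) _.
by rewrite normrM ler_piMr // ger0_norm ?dnorm_nneg.
Qed.

Lemma KQ_ge0 : 0 <= KQ.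
Proof.
apply: le_trans (dnorm_nneg dge0 (Q (fun _ => 0))) _.
apply: ub_le_sup; first exact: opnorm_bounded.
exists (fun _ => 0); split; first exact: dual_zero.
by split => //; apply: (dnorm_le dge0) => // f _ _; rewrite normr0.
Qed.

(* ||Q phi|| <= ||Q|| ||phi||, by rescaling phi into the unit ball. *)
Lemma dnorm_Q phi : dual phi -> dnorm (Q phi) <= KQ * dnorm phi.
Proof.
move=> hp; have [c0|cn0] := eqVneq (dnorm phi) 0.
  have phi0 : phi = (fun _ => 0).
    apply: (dual_ext hp dual_zero) => f hf; apply/eqP; rewrite -normr_le0.
    by have := dnorm_bound dge0 hp hf; rewrite c0 mul0r.
  by rewrite c0 mulr0 phi0 Q0; apply: (dnorm_le dge0) => // f _ _; rewrite normr0.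
have cpos : 0 < dnorm phi by rewrite lt0r cn0 dnorm_nneg.
have hp' := dual_scaled dge0 (dnorm phi)^-1 hp.
have hK : dnorm (Q (fun f => (dnorm phi)^-1 * phi f)) <= KQ.
  apply: ub_le_sup; first exact: opnorm_bounded.
  exists (fun f => (dnorm phi)^-1 * phi f); split => //; split => //.
  apply: le_trans (dnorm_scale dge0 _ hp) _.
  by rewrite gtr0_norm ?invr_gt0 // mulVf // gt_eqF.
have -> : Q phi = (fun f => dnorm phi * Q (fun f => (dnorm phi)^-1 * phi f) f).
  by rewrite Q_scale //; apply: funext => f; rewrite mulrA mulfV ?gt_eqF // mul1r.
apply: le_trans (dnorm_scale dge0 _ (Q_dual hp')) _.
by rewrite gtr0_norm // mulrC ler_wpM2r // ltW.
Qed.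

Local Notation P := (PG d x0 act Q M).

Definition Tm (nu : (Qp -> R) -> R) : (T -> R) -> R := Q (Rt nu).

Lemma P_factor mu : free mu -> P mu = Tm (Sop mu).
Proof. by move=> hm; rewrite /Tm Rt_S. Qed.

Lemma Tm_free nu : freeq nu -> free (Tm nu).
Proof. by move=> hn; apply/Q_free/dual_Rt/(proj1 hn). Qed.

Lemma Tm_lin : lin_on freeq Tm.
Proof.
move=> a u v hu hv; rewrite /Tm /Rt adj_lin Q_lin //.
  exact: (dual_Rt (proj1 hu)).
exact: (dual_Rt (proj1 hv)).
Qed.

Lemma dnorm_Tm nu : freeq nu -> dnorm (Tm nu) <= KQ * dnormq nu.
Proof.
move=> hn; apply: le_trans (dnorm_Q (dual_Rt (proj1 hn))) _.
by apply: ler_wpM2l; [exact: KQ_ge0 | exact: (dnorm_Rt (proj1 hn))].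
Qed.

Lemma P_fix rho : free rho -> (forall g, Tdd g rho = rho) -> P rho = rho.
Proof. by move=> hr hinv; rewrite /PG RG_fix ?Q_fix //; exact: (proj1 hr). Qed.

Lemma P_Tm nu : freeq nu -> P (Tm nu) = Tm nu.
Proof.
move=> hn; apply: P_fix; first exact: Tm_free.
by move=> g; rewrite /Tm -Q_comm ?Rt_inv //; exact: (dual_Rt (proj1 hn)).
Qed.

Lemma P_free mu : free mu -> free (P mu).
Proof. by move=> hm; rewrite P_factor //; apply/Tm_free/free_S. Qed.

Lemma P_idem mu : free mu -> P (P mu) = P mu.
Proof. by move=> hm; rewrite [P mu]P_factor // P_Tm //; exact: free_S. Qed.

Lemma S_lin : lin_on free Sop.
Proof. by move=> a u v _ _; exact: adj_lin. Qed.

Lemma P_lin : lin_on free P.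
Proof.
move=> a u v hu hv; have huv := free_lin dge0 a hu hv.
by rewrite !P_factor // S_lin // Tm_lin //; apply: free_S.
Qed.

Lemma dnorm_P mu : free mu -> dnorm (P mu) <= KQ * dnorm mu.
Proof.
move=> hm; rewrite P_factor //; apply: le_trans (dnorm_Tm (free_S hm)) _.
by apply: ler_wpM2l; [exact: KQ_ge0 | exact: (dnorm_S (proj1 hm))].
Qed.

Section Separation.
Variable Y : set (Qp -> R).
Hypothesis Y_lip : forall f, Y f -> lip0q f.
Hypothesis Y_sep : forall nu, freeq nu -> nu <> (fun _ => 0) -> exists f, Y f /\ nu f <> 0.
Hypothesis Y_ker : forall mu, free mu -> P mu = (fun _ => 0) ->
  forall f, Y f -> mu (Psi f) = 0.

Lemma S_ker mu : free mu -> P mu = (fun _ => 0) -> Sop mu = (fun _ => 0).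
Proof.
move=> hm P0; apply: contrapT => nz; have [f [hf nf]] := Y_sep (free_S hm) nz.
by apply: nf; rewrite SopE ?Y_ker //; exact: Y_lip.
Qed.

(* S o P_G = S on F(M): mu - P_G mu lies in ker P_G, on which S vanishes. *)
Lemma S_P mu : free mu -> Sop (P mu) = Sop mu.
Proof.
move=> hm; have hp := P_free hm; pose nu := fun f => -1 * mu f + P mu f.
have hnu : free nu by apply: free_lin.
have P0 : P nu = (fun _ => 0) by rewrite /nu P_lin // P_idem //; apply: funext => f; ring.
have := S_ker hnu P0; rewrite /nu S_lin // => h.
by apply: funext => f; have := congr1 (fun F => F f) h => /=; lra.
Qed.

(* On finite combinations nu of deltas, S (T nu) = nu: such a nu is S mu for a
   combination mu of deltas at representatives, and T (S mu) = P_G mu. *)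
Lemma S_Tm_span nu : span_delta dq q0 nu -> Sop (Tm nu) = nu.
Proof.
move=> [n [a [A ->]]]; pose mu := fun f => \sum_(i < n) a i * delta (pickq (A i)) f.
have hm : free mu by apply: (free_of_span dge0); exists n, a, (fun i => pickq (A i)).
have Smu : Sop mu = (fun f => \sum_(i < n) a i * deltaq (A i) f).
  rewrite /Sop adj_comb; apply: funext => f; apply: eq_bigr => i _.
  by rewrite -/Sop S_delta -pickq_cls.
by rewrite -Smu -P_factor // S_P.
Qed.

Lemma S_Tm nu : freeq nu -> Sop (Tm nu) = nu.
Proof.
move=> hn; apply: (dual_ext (dual_S (proj1 (Tm_free hn))) (proj1 hn)) => f hf.
have [hPf nPf] := proj1 Psi_nonexp f hf.
pose Phi nu' := Tm nu' (Psi f) - nu' f.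
apply/eqP; rewrite SopE // -subr_eq0 -/(Phi nu); apply/eqP; move: nu hn.
apply: (free_density dq_ge0 (C := (KQ + 1) * lipnormq f)); last first.
  move=> psi sp; have := congr1 (fun F => F f) (S_Tm_span sp).
  by rewrite /= SopE // /Phi => ->; rewrite subrr.
move=> u v hu hv; have huv := free_sub dq_ge0 hu hv.
have -> : Phi u - Phi v = Tm (fun g => u g - v g) (Psi f) - (u f - v f).
  have -> : Tm (fun g => u g - v g) = (fun g => -1 * Tm v g + Tm u g).
    by rewrite -Tm_lin //; congr Tm; apply: funext => g; ring.
  by rewrite /Phi; ring.
apply: le_trans (ler_normB _ _) _; rewrite !mulrDl mul1r; apply: lerD.
  apply: le_trans (dnorm_bound dge0 (proj1 (Tm_free huv)) hPf) _.
  apply: le_trans (ler_pM (dnorm_nneg dge0 _) (lipnorm_ge0 dge0 _) (dnorm_Tm huv) nPf) _.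
  by rewrite mulrAC.
by rewrite mulrC; exact: (approx_bound dq_ge0 (proj1 hu) (proj1 hv) hf).
Qed.

Lemma ker_P mu : free mu -> (P mu = (fun _ => 0) <-> perp d x0 lip0G mu).
Proof.
move=> hm; split => [P0|[_ hperp]].
  split => // F hF; have := congr1 (fun nu => nu (sharp F)) (S_ker hm P0).
  by rewrite /= SopE ?Psi_sharp //; exact: (proj1 (sharp_lip hF)).
have S0 : Sop mu = (fun _ => 0).
  apply: funext => f; have [hf|nf] := pselect (lip0q f); last by rewrite /Sop adjN.
  by rewrite SopE //; apply: hperp; exact: Psi_lip0G.
have Rt0 : Rt (fun _ => 0) = (fun _ => 0) by apply: funext => f; rewrite /Rt /adj; case: ifP.
by rewrite P_factor // S0 /Tm Rt0 Q0.
Qed.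

Theorem quotient_free_complemented :
  (forall mu, free mu -> (P mu = (fun _ => 0) <-> perp d x0 lip0G mu)) /\
  (exists (Tm0 : ((Qp -> R) -> R) -> ((T -> R) -> R))
          (S : ((T -> R) -> R) -> ((Qp -> R) -> R)),
     lin_on freeq Tm0 /\
     (forall nu, freeq nu -> exists mu, free mu /\ Tm0 nu = P mu) /\
     (forall x, Tm0 (deltaq (cls x)) = P (delta x)) /\
     (forall nu, freeq nu -> dnorm (Tm0 nu) <= KQ * dnormq nu) /\
     lin_on free S /\
     (forall mu, free mu -> freeq (S mu)) /\
     (forall x, S (delta x) = deltaq (cls x)) /\
     (forall mu, free mu -> dnormq (S mu) <= dnorm mu) /\
     (forall nu, freeq nu -> S (Tm0 nu) = nu) /\
     (forall mu, free mu -> Tm0 (S (P mu)) = P mu)) /\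
  (lin_on free P /\
   (exists C : R, forall mu, free mu -> dnorm (P mu) <= C * dnorm mu) /\
   (forall mu, free mu -> free (P mu) /\ P (P mu) = P mu)).
Proof.
split; first exact: ker_P.
split.
  exists Tm, Sop; split; first exact: Tm_lin.
  split; first by move=> nu hn; exists (Tm nu); split; [exact: Tm_free | rewrite P_Tm].
  split; first by move=> x; rewrite P_factor ?S_delta //; exact: free_delta.
  split; first exact: dnorm_Tm.
  split; first exact: S_lin.
  split; first exact: free_S.
  split; first exact: S_delta.
  split; first by move=> mu hm; apply: dnorm_S; case: hm.
  split; first exact: S_Tm.
  by move=> mu hm; rewrite -P_factor ?P_idem //; exact: P_free.
split; first exact: P_lin.
split; first by exists KQ; exact: dnorm_P.
by move=> mu hm; split; [exact: P_free | exact: P_idem].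
Qed.

End Separation.

End Projection.

End Averaging.

End GroupAction.

Lemma continuous_epsP {R : realType} {G : topologicalType} (phi : G -> R) :
  continuous phi <->
  (forall g (eps : R), 0 < eps -> exists U, nbhs g U /\ forall h, U h -> `|phi h - phi g| < eps).
Proof.
split=> [H g eps he | H g].
  have /cvgrPdist_lt /(_ eps he) hn := H g.
  by exists [set h | `|phi g - phi h| < eps]; split => // h /=; rewrite distrC.
apply/cvgrPdist_lt => eps he; have [U [hU HU]] := H g eps he.
by apply: filterS hU => h Uh; rewrite distrC; exact: HU.
Qed.

Lemma dist3_lt {R : realType} (a b c d eps : R) :
  `|a - b| <= eps / 3 -> `|b - c| < eps / 3 -> `|c - d| <= eps / 3 -> `|a - d| < eps.
Proof.
move=> h1 h2 h3; have -> : a - d = (a - b) + ((b - c) + (c - d)) by ring.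
apply: le_lt_trans (ler_normD _ _) _.
have h : `|(b - c) + (c - d)| < eps / 3 + eps / 3.
  by apply: le_lt_trans (ler_normD _ _) _; rewrite addrC; exact: ler_ltD.
by apply: lt_le_trans (ler_ltD h1 h) _; lra.
Qed.

Lemma dist_lin_lt {R : realType} (a x y u v eps : R) : 0 < eps ->
  `|x - y| < eps / (2 * (`|a| + 1)) -> `|u - v| < eps / 2 ->
  `|(a * x + u) - (a * y + v)| < eps.
Proof.
move=> he h1 h2; have -> : a * x + u - (a * y + v) = a * (x - y) + (u - v) by ring.
apply: le_lt_trans (ler_normD _ _) _; rewrite normrM.
have : `|a| * `|x - y| <= eps / 2.
  apply: le_trans (_ : (`|a| + 1) * `|x - y| <= _); first by apply: ler_wpM2r => //; lra.
  rewrite mulrC -ler_pdivlMr ?ltr_wpDl //; apply: ltW; apply: lt_le_trans h1 _.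
  by rewrite invfM mulrA.
by move=> h; apply: lt_le_trans (ler_ltD h h2) _; lra.
Qed.

Section AdmissibleFunctions.
Context {R : realType} {G : topologicalType} (mul : G -> G -> G) (inv : G -> G) (e : G)
  {T : Type} (d : T -> T -> R) (x0 : T) (act : G -> T -> T).
Hypotheses (dge0 : forall x y, 0 <= d x y) (d_refl : forall x, d x x = 0).
Hypotheses (d_tri : forall x y z, d x z <= d x y + d y z).
Hypotheses (act_e : forall x, act e x = x) (inv_l : forall g, mul (inv g) g = e).
Hypothesis act_mul : forall g h x, act (mul g h) x = act g (act h x).
Hypothesis act_iso : forall g x y, d (act g x) (act g y) = d x y.
Hypothesis act_cont : forall g x (eps : R), 0 < eps -> exists U, nbhs g U /\
  exists del : R, 0 < del /\ forall h y, U h -> d y x < del -> d (act h y) (act g x) < eps.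
Hypothesis orbit_bdd : forall x, exists C : R, forall g, d (act g x) x <= C.

Lemma act_cont_pt g y (eps : R) : 0 < eps ->
  exists U, nbhs g U /\ forall h, U h -> d (act h y) (act g y) < eps.
Proof.
move=> he; have [U [hU [del [hdel H]]]] := act_cont g y he.
by exists U; split => // h Uh; apply: H => //; rewrite d_refl.
Qed.

Lemma lip_pos_const f : lip0 d x0 f ->
  exists L : R, 0 < L /\ forall x y, `|f x - f y| <= L * d x y.
Proof.
move=> [_ [L HL]]; exists (`|L| + 1); split; first by rewrite ltr_wpDl.
move=> x y; apply: le_trans (HL x y) _; apply: ler_wpM2r => //.
by apply: le_trans (ler_norm _) _; lra.
Qed.

Lemma orbit_fun_bdd f y : lip0 d x0 f -> exists C : R, forall g, `|f (act g y)| <= C.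
Proof.
move=> hf; have [L [hL HL]] := lip_pos_const hf; have [C HC] := orbit_bdd y.
exists (L * (C + d y x0)) => g; rewrite -[f (act g y)]subr0 -(proj1 hf).
apply: le_trans (HL _ _) _; apply: ler_wpM2l; first exact: ltW.
by apply: le_trans (d_tri _ y _) _; apply: lerD.
Qed.

Lemma bc_lin (a : R) (phi psi : G -> R) : bcont phi -> bcont psi ->
  bcont (fun g => a * phi g + psi g).
Proof.
move=> [/continuous_epsP c1 [C1 H1]] [/continuous_epsP c2 [C2 H2]]; split.
  apply/continuous_epsP => g eps he.
  have he1 : 0 < eps / (2 * (`|a| + 1)) by rewrite divr_gt0 // mulr_gt0 // ltr_wpDl.
  have he2 : 0 < eps / 2 by rewrite divr_gt0.
  have [U1 [hU1 HU1]] := c1 g _ he1; have [U2 [hU2 HU2]] := c2 g _ he2.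
  exists (U1 `&` U2); split; first exact: filterI.
  by move=> h [u1 u2]; apply: dist_lin_lt => //; [apply: HU1 | apply: HU2].
exists (`|a| * C1 + C2) => g; apply: le_trans (ler_normD _ _) _; rewrite normrM.
by apply: lerD => //; apply: ler_wpM2l.
Qed.

Lemma bc_const c : @bcont R G (fun _ => c).
Proof. by split; [exact: cst_continuous | exists `|c|]. Qed.

Lemma bc_orbit f y : lip0 d x0 f -> bcont (fun g => f (act g y)).
Proof.
move=> hf; split; last exact: orbit_fun_bdd.
have [L [hL HL]] := lip_pos_const hf; apply/continuous_epsP => g eps he.
have [U [hU HU]] := act_cont_pt g y (divr_gt0 he hL).
exists U; split => // h Uh; apply: le_lt_trans (HL _ _) _.
by rewrite mulrC -ltr_pdivlMr //; apply: HU.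
Qed.

Lemma bc_closed (phi : G -> R) : (forall eps : R, 0 < eps ->
  exists psi, bcont psi /\ forall g, `|phi g - psi g| <= eps) -> bcont phi.
Proof.
move=> H; split.
  apply/continuous_epsP => g eps he; have he3 : 0 < eps / 3 by rewrite divr_gt0.
  have [psi [[/continuous_epsP cp _] Hp]] := H _ he3; have [U [hU HU]] := cp g _ he3.
  exists U; split => // h Uh; apply: (@dist3_lt _ _ (psi h) (psi g)) => //; first exact: HU.
  by rewrite distrC.
have [psi [[_ [C HC]] Hp]] := H _ ltr01; exists (C + 1) => g.
rewrite -[phi g](subrK (psi g)); apply: le_trans (ler_normD _ _) _.
by rewrite addrC; apply: lerD.
Qed.

Lemma bu_lin (a : R) (phi psi : G -> R) : buc mul e phi -> buc mul e psi ->
  buc mul e (fun g => a * phi g + psi g).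
Proof.
move=> [[C1 H1] c1] [[C2 H2] c2]; split.
  exists (`|a| * C1 + C2) => g; apply: le_trans (ler_normD _ _) _; rewrite normrM.
  by apply: lerD => //; apply: ler_wpM2l.
move=> eps he.
have he1 : 0 < eps / (2 * (`|a| + 1)) by rewrite divr_gt0 // mulr_gt0 // ltr_wpDl.
have he2 : 0 < eps / 2 by rewrite divr_gt0.
have [U1 [hU1 HU1]] := c1 _ he1; have [U2 [hU2 HU2]] := c2 _ he2.
exists (U1 `&` U2); split; first exact: filterI.
move=> g h [u1 u2]; have [a1 a2] := HU1 g h u1; have [b1 b2] := HU2 g h u2.
by split; apply: dist_lin_lt.
Qed.

Lemma bu_const (c : R) : buc mul e (fun _ => c).
Proof.
split; first by exists `|c|.
by move=> eps he; exists setT; split => [|g h _]; [exact: filterT | rewrite subrr normr0].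
Qed.

(* Right uniform continuity of an orbit function uses a conjugation-invariant
   neighbourhood of e, which exists in a SIN group. *)
Lemma bu_orbit f y : SIN mul inv e -> lip0 d x0 f -> buc mul e (fun g => f (act g y)).
Proof.
move=> sin hf; split; first exact: orbit_fun_bdd.
have [L [hL HL]] := lip_pos_const hf; move=> eps he.
have [U0 [hU0 HU0]] := act_cont_pt e y (divr_gt0 he hL).
have [V [hV [VU Vinv]]] := sin _ hU0.
have near_e g v : V v -> `|f (act g (act v y)) - f (act g y)| < eps.
  move=> Vv; apply: le_lt_trans (HL _ _) _; rewrite act_iso mulrC -ltr_pdivlMr //.
  by have := HU0 v (VU v Vv); rewrite act_e.
exists V; split => // g h Vh; split; first by rewrite act_mul; apply: near_e.
have : [set mul (mul g v) (inv g) | v in V] h by rewrite Vinv.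
move=> [v Vv <-]; rewrite !act_mul -(act_mul (inv g)) inv_l act_e.
exact: near_e.
Qed.

Lemma bu_closed (phi : G -> R) : (forall eps : R, 0 < eps ->
  exists psi, buc mul e psi /\ forall g, `|phi g - psi g| <= eps) -> buc mul e phi.
Proof.
move=> H; split.
  have [psi [[[C HC] _] Hp]] := H _ ltr01; exists (C + 1) => g.
  rewrite -[phi g](subrK (psi g)); apply: le_trans (ler_normD _ _) _.
  by rewrite addrC; apply: lerD.
move=> eps he; have he3 : 0 < eps / 3 by rewrite divr_gt0.
have [psi [[_ cp] Hp]] := H _ he3; have [U [hU HU]] := cp _ he3.
exists U; split => // g h Uh; have [a1 a2] := HU g h Uh.
split; first by apply: (@dist3_lt _ _ (psi (mul g h)) (psi g)); rewrite // distrC.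
by apply: (@dist3_lt _ _ (psi (mul h g)) (psi g)); rewrite // distrC.
Qed.

End AdmissibleFunctions.

Unset Implicit Arguments. Set Strict Implicit.

Theorem theorem4p7 (R : realType) (G : topologicalType) (mul : G -> G -> G)
  (inv : G -> G) (e : G) (T : Type) (d : T -> T -> R) (x0 : T)
  (act : G -> T -> T) (M : (G -> R) -> R)
  (Q : ((T -> R) -> R) -> ((T -> R) -> R))
  (Y : set (quot_pts d act -> R)) :
  is_metric d ->
  is_topgroup mul inv e -> hausdorff_space G ->
  isom_action mul e d act ->
  ((locally_compact [set: G] /\ bimean mul (@bcont R G) M) \/
   (SIN mul inv e /\ bimean mul (buc mul e) M)) ->
  (* Q : X** -> X** bounded linear projection with range kappa_X(X) *)
  (forall phi, dual_elt d x0 phi -> dual_elt d x0 (Q phi)) ->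
  lin_on (dual_elt d x0) Q ->
  (exists C : R, forall phi, dual_elt d x0 phi -> dnorm d x0 (Q phi) <= C * dnorm d x0 phi) ->
  (forall phi, dual_elt d x0 phi -> Q (Q phi) = Q phi) ->
  (forall phi, dual_elt d x0 phi -> free_elt d x0 (Q phi)) ->
  (forall mu, free_elt d x0 mu -> exists phi, dual_elt d x0 phi /\ Q phi = mu) ->
  (* T_g** (ker Q) ⊂ ker Q *)
  (forall g phi, dual_elt d x0 phi -> Q phi = (fun _ => 0) ->
      Q (Tdd d x0 act g phi) = (fun _ => 0)) ->
  (* Y ⊂ Lip_0(M/G) separates the points of F(M/G) *)
  (forall f, Y f -> lip0 (dq d act) (cls d act x0) f) ->
  (forall nu, free_elt (dq d act) (cls d act x0) nu -> nu <> (fun _ => 0) ->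
      exists f, Y f /\ nu f <> 0) ->
  (* ker P_G ⊂ Psi(Y)_perp *)
  (forall mu, free_elt d x0 mu -> PG d x0 act Q M mu = (fun _ => 0) ->
      forall f, Y f -> mu (Psi d act f) = 0) ->
  (* ker P_G = Lip_0^G(M)_perp *)
  (forall mu, free_elt d x0 mu ->
     (PG d x0 act Q M mu = (fun _ => 0) <-> perp d x0 (lip0G d x0 act) mu)) /\
  (* T : F(M/G) -> P_G[X] isomorphism with inverse S restricted to P_G[X] *)
  (exists (Tm : ((quot_pts d act -> R) -> R) -> ((T -> R) -> R))
          (S : ((T -> R) -> R) -> ((quot_pts d act -> R) -> R)),
     lin_on (free_elt (dq d act) (cls d act x0)) Tm /\
     (forall nu, free_elt (dq d act) (cls d act x0) nu ->
        exists mu, free_elt d x0 mu /\ Tm nu = PG d x0 act Q M mu) /\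
     (forall x, Tm (delta (dq d act) (cls d act x0) (cls d act x)) =
                PG d x0 act Q M (delta d x0 x)) /\
     (forall nu, free_elt (dq d act) (cls d act x0) nu ->
        dnorm d x0 (Tm nu) <= opnorm_dual d x0 Q * dnorm (dq d act) (cls d act x0) nu) /\
     lin_on (free_elt d x0) S /\
     (forall mu, free_elt d x0 mu -> free_elt (dq d act) (cls d act x0) (S mu)) /\
     (forall x, S (delta d x0 x) = delta (dq d act) (cls d act x0) (cls d act x)) /\
     (forall mu, free_elt d x0 mu ->
        dnorm (dq d act) (cls d act x0) (S mu) <= dnorm d x0 mu) /\
     (forall nu, free_elt (dq d act) (cls d act x0) nu -> S (Tm nu) = nu) /\
     (forall mu, free_elt d x0 mu ->
        Tm (S (PG d x0 act Q M mu)) = PG d x0 act Q M mu)) /\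
  (* P_G is a bounded linear projection of F(M) onto P_G[X] (complemented) *)
  (lin_on (free_elt d x0) (PG d x0 act Q M) /\
   (exists C : R, forall mu, free_elt d x0 mu ->
       dnorm d x0 (PG d x0 act Q M mu) <= C * dnorm d x0 mu) /\
   (forall mu, free_elt d x0 mu ->
       free_elt d x0 (PG d x0 act Q M mu) /\
       PG d x0 act Q M (PG d x0 act Q M mu) = PG d x0 act Q M mu)).
Proof.
move=> [dge0 [dsep [_ dtri]]] [_ [_ [linv _]]] _ [ae [am [ai [acont aorb]]]] hcase
  Qd Ql Qb Qi Qf Qo Qk Yl Ys Yk.
have drefl x : d x x = 0 by apply/(proj2 (dsep x x)).
case: hcase => [[_ HM] | [hsin HM]].
- apply: (quotient_free_complemented dge0 drefl ae linv am ai (@bc_lin R G) (@bc_const R G)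
    _ _ HM Qd Ql Qb Qi Qf Qo Qk Yl Ys Yk).
  + by move=> f y; apply: bc_orbit.
  + exact: bc_closed.
- apply: (quotient_free_complemented dge0 drefl ae linv am ai (@bu_lin R G mul e)
    (@bu_const R G mul e) _ _ HM Qd Ql Qb Qi Qf Qo Qk Yl Ys Yk).
  + by move=> f y; apply: bu_orbit.
  + exact: bu_closed.
Qed.
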